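(* Let $\kappa\ge1$, $n=2^\kappa-1$, $0<\epsilon<1$, and let $G_{\mathrm{simp}}$ be a binary $\kappa\times n$ matrix whose columns are exactly the $2^\kappa-1$ nonzero vectors of $\mathbb{F}_2^\kappa$ (the simplex code generator). Then for every binary $\kappa\times n$ matrix $G$, $\lambda(n,\epsilon,q(G_{\mathrm{simp}}))\le\lambda(n,\epsilon,q(G))$.
   Context: $W=\mathbb{F}_2^\kappa$; $\nu(i)\in W$ is the binary expansion of $i\in\{0,\dots,2^\kappa-1\}$. For a binary $\kappa\times n$ matrix $G$, $q(G)=(q_0,\dots,q_{2^\kappa-1})$ with $q_i$ the number of columns of $G$ equal to $\nu(i)$ divided by $n$. For a subspace $S\subseteq W$, $\zeta(S,q)=\sum_{i:\nu(i)\in S}q_i$; $\Xi(W,\kappa-1)$ is the set of $(\kappa-1)$-dimensional subspaces of $W$. $\lambda(n,\epsilon,q)=(2-\epsilon)^n2^{-\kappa}\Big(1+\sum_{S\in\Xi(W,\kappa-1)}\big(\tfrac{\epsilon}{2-\epsilon}\big)^{n(1-\zeta(S,q))}\Big)-1$, which for $q=q(G)$ is the $\chi^2$ divergence between $p_{MZ}$ and $p_Mp_Z$ for the coset code with base-code generator $G$ (uniform message) over a binary erasure channel with erasure probability $\epsilon$. *)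

From HB Require Import structures.
From mathcomp Require Import all_boot all_order all_algebra.
From mathcomp Require Import reals exp.
Set Implicit Arguments. Unset Strict Implicit. Unset Printing Implicit Defensive.
Import Order.TTheory GRing.Theory Num.Theory.
Local Open Scope ring_scope.

(* W = F_2^kappa, represented as row vectors 'rV['F_2]_kappa. *)

Definition nu (kappa : nat) (i : 'I_(2 ^ kappa)) : 'rV['F_2]_kappa :=
  \row_(k < kappa) ((odd (i %/ 2 ^ k))%:R : 'F_2).

Definition qvec (R : realType) (kappa n : nat) (G : 'M['F_2]_(kappa, n))
  (i : 'I_(2 ^ kappa)) : R :=
  (#|[set j : 'I_n | (col j G)^T == nu i]|)%:R / n%:R.

(* Xi(W, kappa-1): the (kappa-1)-dimensional subspaces of W, each represented
   canonically by its generated square matrix <<A>>%MS. *)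
Definition Xi (kappa : nat) : {set 'M['F_2]_kappa} :=
  [set (<<A>>)%MS | A in [set A : 'M['F_2]_kappa | \rank A == kappa.-1]].

Definition zeta (R : realType) (kappa : nat) (S : 'M['F_2]_kappa)
  (q : 'I_(2 ^ kappa) -> R) : R :=
  \sum_(i < 2 ^ kappa | (nu i <= S)%MS) q i.

Definition lambda (R : realType) (kappa n : nat) (eps : R)
  (q : 'I_(2 ^ kappa) -> R) : R :=
  (2 - eps) ^+ n * (2 ^+ kappa)^-1 *
    (1 + \sum_(S in Xi kappa) (eps / (2 - eps)) `^ (n%:R * (1 - zeta S q))) - 1.

Definition is_simplex (kappa n : nat) (G : 'M['F_2]_(kappa, n)) : Prop :=
  forall v : 'rV['F_2]_kappa, #|[set j : 'I_n | (col j G)^T == v]| = (v != 0 : nat).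

(* For a = eps/(2 - eps) in (0, 1], lambda is an increasing function of
   sum_S a^(m_G(S)), where m_G(S) = n (1 - zeta(S, q(G))) counts the columns of
   G outside the hyperplane S.  Double counting gives
   sum_S m_G(S) = sum_j #{S | col_j G not in S}, and since GL(W) acts
   transitively on nonzero vectors, each term is largest when col_j G != 0.
   The simplex code attains this bound with m(S) = 2^kappa - 2^(kappa-1) for
   every S, so by convexity of y |-> a^y (Jensen through the tangent line at
   that constant) its sum is the smallest. *)
From HB Require Import structures.
From mathcomp Require Import all_boot all_order all_algebra.
From mathcomp Require Import reals exp mxabelem.
From mathcomp Require Import ring lra.
Import Order.TTheory GRing.Theory Num.Theory.
Local Open Scope ring_scope.

Lemma eq_bits {k i j : nat} : (i < 2 ^ k)%N -> (j < 2 ^ k)%N ->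
  (forall b, (b < k)%N -> odd (i %/ 2 ^ b) = odd (j %/ 2 ^ b)) -> i = j.
Proof.
elim: k i j => [|k IHk] i j.
  by rewrite expn0 !ltnS !leqn0 => /eqP -> /eqP ->.
move=> ltik ltjk eq_bit.
have eq_odd := eq_bit 0%N (ltn0Sn _); rewrite expn0 !divn1 in eq_odd.
have eq_half : i./2 = j./2.
  apply: IHk; try by rewrite -divn2 ltn_divLR // -expnSr.
  by move=> b ltbk; rewrite -!divn2 -!divnMA -!expnS; apply: eq_bit.
by rewrite -(odd_double_half i) -(odd_double_half j) eq_odd eq_half.
Qed.

Lemma nu_bij (k : nat) : bijective (@nu k).
Proof.
apply: inj_card_bij; last by rewrite card_mx !card_ord mul1n.
move=> i j /rowP eq_ij; apply/val_inj/(eq_bits (ltn_ord i) (ltn_ord j)) => b ltbk.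
move: (eq_ij (Ordinal ltbk)); rewrite !mxE.
by case: odd; case: odd => //= /eqP; rewrite ?oner_eq0 // eq_sym oner_eq0.
Qed.

Lemma sum_card_fibers {I T : finType} (f : I -> T) (P : pred T) :
  (\sum_(v | P v) #|[set j | f j == v]|)%N = #|[set j | P (f j)]|.
Proof.
rewrite -sum1_card (partition_big f P) /=; last by move=> j; rewrite inE.
apply: eq_bigr => v Pv; rewrite -sum1_card; apply: eq_bigl => j.
by rewrite !inE; case: eqP => [->|]; rewrite ?Pv ?andbF.
Qed.

Definition cols_in {k n : nat} (G : 'M['F_2]_(k, n)) (S : 'M['F_2]_k) :=
  #|[set j : 'I_n | ((col j G)^T <= S)%MS]|.

Definition cols_outside {k n : nat} (G : 'M['F_2]_(k, n)) (S : 'M['F_2]_k) :=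
  #|[set j : 'I_n | ~~ ((col j G)^T <= S)%MS]|.

Lemma cols_in_outside {k n : nat} (G : 'M['F_2]_(k, n)) (S : 'M['F_2]_k) :
  (cols_in G S + cols_outside G S)%N = n.
Proof.
rewrite /cols_outside.
have -> : [set j | ~~ ((col j G)^T <= S)%MS] = ~: [set j | ((col j G)^T <= S)%MS].
  by apply/setP => j; rewrite !inE.
by rewrite cardsC card_ord.
Qed.

Lemma zeta_qvec {R : realType} {k n : nat} (G : 'M['F_2]_(k, n)) (S : 'M['F_2]_k) :
  zeta S (qvec R G) = (cols_in G S)%:R / n%:R.
Proof.
rewrite /zeta /qvec -mulr_suml -natr_sum /cols_in.
rewrite -(sum_card_fibers (fun j => (col j G)^T) (fun v => (v <= S)%MS)).
by rewrite (reindex (@nu k)) //=; apply: onW_bij (nu_bij k).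
Qed.

Lemma mul_one_sub_zeta_qvec {R : realType} {k n : nat} (G : 'M['F_2]_(k, n))
    (S : 'M['F_2]_k) : (0 < n)%N ->
  n%:R * (1 - zeta S (qvec R G)) = (cols_outside G S)%:R :> R.
Proof.
move=> n_gt0; rewrite zeta_qvec -{1 3}(cols_in_outside G S) natrD.
have : (cols_in G S + cols_outside G S)%:R != 0 :> R.
  by rewrite cols_in_outside pnatr_eq0 -lt0n.
by rewrite natrD => nz; field.
Qed.

Definition hyperplanes_avoiding {k : nat} (v : 'rV['F_2]_k) :=
  #|[set S in Xi k | ~~ (v <= S)%MS]|.

Lemma sum_cols_outside {k n : nat} (G : 'M['F_2]_(k, n)) :
  (\sum_(S in Xi k) cols_outside G S
     = \sum_(j < n) hyperplanes_avoiding (col j G)^T)%N.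
Proof.
rewrite /cols_outside /hyperplanes_avoiding.
under eq_bigr do rewrite -sum1_card big_mkcond /=.
under [RHS]eq_bigr do rewrite -sum1_card big_mkcond /=.
rewrite exchange_big /=; apply: eq_bigr => j _.
by rewrite big_mkcond; apply: eq_bigr => S _; rewrite !inE; case: (S \in Xi k).
Qed.

Lemma hyperplanes_avoiding0 (k : nat) : hyperplanes_avoiding (0 : 'rV['F_2]_k) = 0%N.
Proof.
apply/eqP; rewrite cards_eq0; apply/eqP/setP => S.
by rewrite !inE sub0mx andbF.
Qed.

Lemma unitmx_row_pid {F : fieldType} {k : nat} {v : 'rV[F]_k} : v != 0 ->
  exists2 M, M \in unitmx & v = pid_mx 1 *m M.
Proof.
move=> v_nz; have rank_v : \rank v = 1%N by rewrite rank_rV v_nz.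
set c := col_ebase v 0 0.
have c_nz : c != 0 by have := col_ebase_unit v; rewrite unitmxE det_mx11 unitfE.
exists (c%:M *m row_ebase v).
  by rewrite unitmx_mul row_ebase_unit andbT unitmxE det_scalar unitfE expf_neq0.
rewrite -{1}(mulmx_ebase v) rank_v [col_ebase v]mx11_scalar -/c.
by rewrite mul_scalar_mx mulmxA mul_mx_scalar.
Qed.

Lemma unitmx_row_transitive {F : fieldType} {k : nat} {u v : 'rV[F]_k} :
  u != 0 -> v != 0 -> exists2 M, M \in unitmx & u *m M = v.
Proof.
move=> /unitmx_row_pid [Mu unit_Mu ->] /unitmx_row_pid [Mv unit_Mv ->].
exists (invmx Mu *m Mv); first by rewrite unitmx_mul unitmx_inv unit_Mu.
by rewrite mulmxA mulmxK.
Qed.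

Lemma Xi_genmx {k : nat} {S : 'M['F_2]_k} : S \in Xi k -> <<S>>%MS = S.
Proof. by case/imsetP => A _ ->; rewrite genmx_id. Qed.

Lemma hyperplanes_avoiding_le {k : nat} (u v : 'rV['F_2]_k) : u != 0 -> v != 0 ->
  (hyperplanes_avoiding u <= hyperplanes_avoiding v)%N.
Proof.
move=> u_nz v_nz; have [M unit_M uMv] := unitmx_row_transitive u_nz v_nz.
have free_M : row_free M by rewrite row_free_unit.
pose image (S : 'M['F_2]_k) := <<S *m M>>%MS.
have image_inj : {in [set S in Xi k | ~~ (u <= S)%MS] &, injective image}.
  move=> S1 S2; rewrite !inE => /andP [S1_Xi _] /andP [S2_Xi _].
  move=> /genmxP; rewrite !submxMfree // => /genmxP.
  by rewrite (Xi_genmx S1_Xi) (Xi_genmx S2_Xi).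
rewrite /hyperplanes_avoiding -(card_in_imset image_inj).
apply/subset_leq_card/subsetP => _ /imsetP [S + ->].
rewrite !inE => /andP [/imsetP [A + ->] u_notin_S]; rewrite inE => rank_A.
rewrite genmxE -uMv submxMfree // u_notin_S andbT.
by apply/imsetP; exists (<<A>> *m M)%MS; rewrite // inE mxrankMfree // mxrank_gen.
Qed.

Lemma simplex_col_neq0 {k n : nat} {Gs : 'M['F_2]_(k, n)} (j : 'I_n) :
  is_simplex Gs -> (col j Gs)^T != 0.
Proof.
move=> /(_ (col j Gs)^T); case: eqP => // _ /eqP.
by rewrite cards_eq0 => /eqP /setP /(_ j); rewrite !inE eqxx.
Qed.

Lemma cols_outside_simplex {k n : nat} {Gs : 'M['F_2]_(k, n)} {S : 'M['F_2]_k} :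
  is_simplex Gs -> S \in Xi k ->
  cols_outside Gs S = (2 ^ k - 2 ^ k.-1)%N.
Proof.
move=> simplex_Gs /imsetP [A]; rewrite inE => /eqP rank_A ->.
rewrite /cols_outside.
rewrite -(sum_card_fibers (fun j => (col j Gs)^T) (fun v => ~~ (v <= <<A>>)%MS)).
under eq_bigr do rewrite simplex_Gs.
have -> : (\sum_(v : 'rV['F_2]_k | ~~ (v <= <<A>>)%MS) (v != 0%R : nat))%N
          = #|~: rowg <<A>>%MS|.
  rewrite -sum1_card; apply: eq_big => v; first by rewrite !inE.
  by case: eqP => // ->; rewrite sub0mx.
have card_rV : #|{: 'rV['F_2]_k}| = (2 ^ k)%N by rewrite card_mx mul1n card_Fp.
rewrite -card_rV -(cardsC (rowg <<A>>%MS)) card_rowg mxrank_gen rank_A.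
by rewrite card_Fp // addKn.
Qed.

Lemma sum_cols_outside_le_simplex {k n : nat} (Gs G : 'M['F_2]_(k, n)) :
  is_simplex Gs ->
  (\sum_(S in Xi k) cols_outside G S <= \sum_(S in Xi k) cols_outside Gs S)%N.
Proof.
move=> simplex_Gs; rewrite !sum_cols_outside; apply: leq_sum => j _.
have [->|col_nz] := eqVneq (col j G)^T 0; first by rewrite hyperplanes_avoiding0.
exact: hyperplanes_avoiding_le col_nz (simplex_col_neq0 j simplex_Gs).
Qed.

Lemma powR_tangent_le {R : realType} {a : R} (c y : R) : 0 < a ->
  a `^ c * (1 + ln a * (y - c)) <= a `^ y.
Proof.
move=> a_gt0; rewrite /powR gt_eqF //.
have -> : y * ln a = c * ln a + ln a * (y - c) by ring.
by rewrite expRD ler_wpM2l ?expR_ge0 ?expR_ge1Dx.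
Qed.

Lemma sum_powR_const_le {R : realType} {I : finType} {P : pred I} {m : I -> R}
    {a c : R} : 0 < a <= 1 ->
  \sum_(i | P i) m i <= \sum_(i | P i) c ->
  \sum_(i | P i) a `^ c <= \sum_(i | P i) a `^ m i.
Proof.
move=> /andP [a_gt0 a_le1] sum_m_le.
apply: le_trans (ler_sum _ (fun i _ => powR_tangent_le c (m i) a_gt0)).
under eq_bigr do rewrite -[a `^ c]mulr1.
rewrite -!mulr_sumr ler_wpM2l ?powR_ge0 // big_split /= lerDl -mulr_sumr.
by rewrite mulr_le0 ?ln_le0 // sumrB subr_le0.
Qed.

Lemma lambda_le {R : realType} {kappa n : nat} {eps : R} {q q' : 'I_(2 ^ kappa) -> R} :
  eps <= 2 ->
  \sum_(S in Xi kappa) (eps / (2 - eps)) `^ (n%:R * (1 - zeta S q))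
    <= \sum_(S in Xi kappa) (eps / (2 - eps)) `^ (n%:R * (1 - zeta S q')) ->
  lambda n eps q <= lambda n eps q'.
Proof.
move=> eps_le2 sum_le; rewrite /lambda lerD2r ler_wpM2l ?lerD2l //.
by rewrite mulr_ge0 ?invr_ge0 ?exprn_ge0 // subr_ge0.
Qed.

Theorem corollary3 (R : realType) (kappa : nat) (eps : R)
  (Gsimp G : 'M['F_2]_(kappa, (2 ^ kappa).-1)) :
  (1 <= kappa)%N -> 0 < eps -> eps < 1 ->
  is_simplex Gsimp ->
  lambda (2 ^ kappa).-1 eps (qvec R Gsimp) <= lambda (2 ^ kappa).-1 eps (qvec R G).
Proof.
move=> kappa_ge1 eps_gt0 eps_lt1 simplex_Gsimp.
have n_gt0 : (0 < (2 ^ kappa).-1)%N.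
  by rewrite -ltnS prednK ?expn_gt0 // -[X in (X < _)%N](expn0 2) ltn_exp2l.
apply: lambda_le; first lra.
under eq_bigr => S S_Xi do
  rewrite mul_one_sub_zeta_qvec // (cols_outside_simplex simplex_Gsimp S_Xi).
under [X in _ <= X]eq_bigr do rewrite mul_one_sub_zeta_qvec //.
apply: sum_powR_const_le.
  by rewrite divr_gt0 ?ler_pdivrMr /=; lra.
rewrite -!natr_sum ler_nat -(eq_bigr _ (fun S S_Xi =>
  cols_outside_simplex simplex_Gsimp S_Xi)).
exact: sum_cols_outside_le_simplex.
Qed.
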